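(* Let $n,k,l$ be nonnegative integers with $k+l\le n$, let $\alpha,\beta>-1$, set $\sigma=\alpha+\beta+1$, and for $i=k+l,\ldots,n$ and $h=k,\ldots,n-l$ define \[ c_{ih}=\frac{(\alpha+2l+1)_{i-k-l}}{(i-k-l)!}\binom{n}{h}^{-1}\binom{n-k-l}{h-k}\,Q_{i-k-l}(n-l-h;\,\alpha+2l,\,\beta+2k,\,n-k-l). \] Then for each fixed $i$ (and whenever the indices involved lie in the range $k\le h\le n-l$): \[ c_{i,n-l}=\frac{(\alpha+2l+1)_{i-k-l}}{(i-k-l)!}\binom{n}{l}^{-1}, \] \[ c_{i,n-l-1}=c_{i,n-l}\,\frac{(n-k-l)(l+1)}{n-l}\left[1-\frac{(k+l-i)(i+k+l+\sigma)}{(k+l-n)(\alpha+2l+1)}\right], \] and for $h=n-l-2,n-l-3,\ldots,k$, \[ c_{ih}=F_i(h)\,c_{i,h+1}+G(h)\,c_{i,h+2}, \] where \[ H(h)=\frac{(n-l-h-1)(h+k+\beta+2)}{(n+l+\alpha-h)(k-h-1)}, \] \[ F_i(h)=\frac{(n-h)(h+1-k)}{(n-l-h)(h+1)}\left[1-H(h)-\frac{(k+l-i)(i+k+l+\sigma)}{(n+l+\alpha-h)(k-h-1)}\right], \] \[ G(h)=\frac{(n-h-1)_2\,(h+1-k)_2}{(n-l-h-1)_2\,(h+1)_2}\,H(h). \]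
   Context: Pochhammer symbol: $(a)_0=1$, $(a)_j=a(a+1)\cdots(a+j-1)$. Hahn polynomials: for a nonnegative integer $N$, $a,b>-1$ and $m=0,1,\ldots,N$, $Q_m(x;a,b,N)=\sum_{j=0}^m\frac{(-m)_j(m+a+b+1)_j(-x)_j}{j!\,(a+1)_j\,(-N)_j}$. (The numbers $c_{ih}$ are the coefficients of the modified Jacobi polynomial $J_{i,k,l}^{(\alpha,\beta)}(x)=(1-x)^lx^kR^{(\alpha+2l,\beta+2k)}_{i-k-l}(x)$ in the Bernstein basis $B^n_h(x)=\binom nh x^h(1-x)^{n-h}$, $h=k,\ldots,n-l$, where $R^{(a,b)}_m(x)=\frac{(a+1)_m}{m!}\sum_{j=0}^m\frac{(-m)_j(m+a+b+1)_j}{j!(a+1)_j}(1-x)^j$.) *)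

From HB Require Import structures.
From mathcomp Require Import all_boot all_order all_algebra.
Set Implicit Arguments. Unset Strict Implicit. Unset Printing Implicit Defensive.
Import Order.TTheory GRing.Theory Num.Theory.
Local Open Scope ring_scope.

Definition poch (R : ringType) (a : R) (j : nat) : R :=
  \prod_(t < j) (a + t%:R).

Definition hahnQ (R : fieldType) (m : nat) (x a b : R) (N : nat) : R :=
  \sum_(j < m.+1)
    (poch (- m%:R) j * poch (m%:R + a + b + 1) j * poch (- x) j)
    / ((j`!)%:R * poch (a + 1) j * poch (- N%:R) j).

Definition cih (R : fieldType) (n k l : nat) (alpha beta : R) (i h : nat) : R :=
  poch (alpha + (2 * l)%:R + 1) (i - k - l) / ((i - k - l)`!)%:R
  * ('C(n, h)%:R)^-1 * ('C(n - k - l, h - k))%:R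
  * hahnQ (i - k - l) (n - l - h)%:R (alpha + (2 * l)%:R) (beta + (2 * k)%:R)
          (n - k - l).

Definition Hfun (R : fieldType) (n k l : nat) (alpha beta : R) (h : nat) : R :=
  ((n%:R - l%:R - h%:R - 1) * (h%:R + k%:R + beta + 2))
  / ((n%:R + l%:R + alpha - h%:R) * (k%:R - h%:R - 1)).

Definition Ffun (R : fieldType) (n k l : nat) (alpha beta : R) (i h : nat) : R :=
  let sigma := alpha + beta + 1 in
  ((n%:R - h%:R) * (h%:R + 1 - k%:R)) / ((n%:R - l%:R - h%:R) * (h%:R + 1))
  * (1 - Hfun n k l alpha beta h
       - ((k%:R + l%:R - i%:R) * (i%:R + k%:R + l%:R + sigma))
         / ((n%:R + l%:R + alpha - h%:R) * (k%:R - h%:R - 1))).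

Definition Gfun (R : fieldType) (n k l : nat) (alpha beta : R) (h : nat) : R :=
  (poch (n%:R - h%:R - 1) 2 * poch (h%:R + 1 - k%:R) 2)
  / (poch (n%:R - l%:R - h%:R - 1) 2 * poch (h%:R + 1) 2)
  * Hfun n k l alpha beta h.

From HB Require Import structures.
From mathcomp Require Import all_boot all_order all_algebra.
From mathcomp Require Import ring lra zify.
Set Implicit Arguments. Unset Strict Implicit. Unset Printing Implicit Defensive.
Import Order.TTheory GRing.Theory Num.Theory.
Local Open Scope ring_scope.

(* With weight w_h = binom(n-k-l, h-k) / binom(n, h), the coefficient c_{ih} is,
   up to a factor independent of h, w_h Q_m(n-l-h; a, b, N) with m = i-k-l,
   a = alpha+2l, b = beta+2k, N = n-k-l.  The ratio w_{h+1} / w_h is an explicit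
   rational function of h, and increasing h by one decreases the argument of the
   Hahn polynomial by one.  Hence the second-order difference equation of Hahn
   polynomials in the variable x,
     B(x) Q(x+1) - (B(x) + D(x)) Q(x) + D(x) Q(x-1) = m(m+a+b+1) Q(x),
     B(x) = (x+a+1)(x-N),  D(x) = x(x-b-N-1),
   turns into the three-term recurrence in h, while Q(0) = 1 and
   Q(1) = 1 - m(m+a+b+1)/((a+1)N) give the two initial values.  The difference
   equation is checked on the hypergeometric series term by term: the operator
   sends (-x)_j to a combination of (-x)_j and (-x)_{j-1}, and the resulting sum
   telescopes thanks to the ratio of consecutive coefficients. *)

Lemma poch0 (R : comNzRingType) (a : R) : poch a 0 = 1.
Proof. by rewrite /poch big_ord0. Qed.

Lemma pochSr (R : comNzRingType) (a : R) j : poch a j.+1 = poch a j * (a + j%:R).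
Proof. by rewrite /poch big_ord_recr. Qed.

Lemma pochSl (R : comNzRingType) (a : R) j : poch a j.+1 = a * poch (a + 1) j.
Proof.
elim: j => [|j IH]; first by rewrite pochSr !poch0; ring.
by rewrite pochSr IH pochSr; ring.
Qed.

Lemma poch2 (R : comNzRingType) (a : R) : poch a 2 = a * (a + 1).
Proof. by rewrite !pochSr poch0 mul1r addr0. Qed.

Lemma poch_neq0 (R : fieldType) (a : R) j :
  (forall t, (t < j)%N -> a + t%:R != 0) -> poch a j != 0.
Proof.
by move=> a_neq0; rewrite /poch prodf_seq_neq0; apply/allP => t _; apply: a_neq0.
Qed.

Lemma poch_opp_nat_eq0 (R : comNzRingType) t j : (t < j)%N -> poch (- t%:R : R) j = 0.
Proof. by move=> ltj; rewrite /poch (bigD1 (Ordinal ltj)) //= addNr mul0r. Qed.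

Section HahnValues.
Variables (R : fieldType) (m N : nat) (a b : R).

Lemma hahnQ_at0 : hahnQ m 0 a b N = 1.
Proof.
rewrite /hahnQ big_ord_recl big1 ?addr0 => [|j _]; first by rewrite !poch0 !mulr1 divr1.
by rewrite (@poch_opp_nat_eq0 _ 0) // !mulr0 mul0r.
Qed.

(* No hypothesis is needed: if (a + 1) N = 0, both sides are 1 since x / 0 = 0. *)
Lemma hahnQ_at1 : hahnQ m 1 a b N = 1 - m%:R * (m%:R + a + b + 1) / ((a + 1) * N%:R).
Proof.
case: m => [|m'].
  by rewrite /hahnQ big_ord_recl big_ord0 !poch0 !mul0r subr0 addr0 !mulr1 divr1.
rewrite /hahnQ 2!big_ord_recl big1 ?addr0 => [|j _]; last first.
  by rewrite (@poch_opp_nat_eq0 _ 1) ?mulr0 ?mul0r.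
rewrite /bump /= !pochSr !poch0 !mul1r !addr0 invr1 mulrN1 mulrN invrN mulrN.
by rewrite !mulNr opprK.
Qed.

End HahnValues.

Lemma hahn_diff_poch (R : comNzRingType) (x a b N : R) j :
  (x + a + 1) * (x - N) * poch (- (x + 1)) j
  - ((x + a + 1) * (x - N) + x * (x - b - N - 1)) * poch (- x) j
  + x * (x - b - N - 1) * poch (- (x - 1)) j
  = j%:R * (j%:R + a + b + 1) * poch (- x) j
    + j%:R * (j%:R + a) * (N - j%:R + 1) * poch (- x) j.-1.
Proof.
case: j => [|j]; first by rewrite !poch0 /=; ring.
have Ep : poch (- (x + 1)) j.+1 = - (x + 1) * poch (- x) j.
  by rewrite pochSl; congr (_ * poch _ _); ring.
have Em : (- x) * poch (- (x - 1)) j.+1 = poch (- x) j * (- x + j%:R) * (- x + j.+1%:R).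
  by rewrite -!pochSr [RHS]pochSl; congr (_ * poch _ _); ring.
have -> : x * (x - b - N - 1) * poch (- (x - 1)) j.+1
          = - (x - b - N - 1) * ((- x) * poch (- (x - 1)) j.+1) by ring.
rewrite Ep Em pochSr /=; move: (poch (- x) j) => p; ring.
Qed.

Section HahnDifferenceEquation.
Variables (R : numFieldType) (m N : nat) (a b : R).
Hypothesis leq_mN : (m <= N)%N.
Hypothesis a_regular : forall t, (t < m)%N -> a + 1 + t%:R != 0.

Definition hahn_coef (j : nat) : R :=
  poch (- m%:R) j * poch (m%:R + a + b + 1) j
  / ((j`!)%:R * poch (a + 1) j * poch (- N%:R) j).

Lemma hahnQE x : hahnQ m x a b N = \sum_(j < m.+1) hahn_coef j * poch (- x) j.
Proof. by apply: eq_bigr => j _; rewrite /hahn_coef mulrAC. Qed.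

Lemma hahn_coefS j : (j < m)%N ->
  hahn_coef j.+1 * (j.+1%:R * (j.+1%:R + a) * (N%:R - j.+1%:R + 1))
  = (m%:R * (m%:R + a + b + 1) - j%:R * (j%:R + a + b + 1)) * hahn_coef j.
Proof.
move=> ltjm; have ltjN : (j < N)%N := leq_trans ltjm leq_mN.
have fact_neq0 : (j`!)%:R != 0 :> R by rewrite pnatr_eq0 -lt0n fact_gt0.
have Sj_neq0 : j.+1%:R != 0 :> R by rewrite pnatr_eq0.
have N_neq0 t : (t <= j)%N -> - N%:R + t%:R != 0 :> R.
  by move=> le_tj; rewrite addrC subr_eq0 eqr_nat neq_ltn (leq_ltn_trans le_tj ltjN).
have pa_neq0 : poch (a + 1) j != 0.
  by apply: poch_neq0 => t lttj; exact/a_regular/(ltn_trans lttj ltjm).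
have pN_neq0 : poch (- N%:R : R) j != 0.
  by apply: poch_neq0 => t lttj; apply/N_neq0/ltnW.
have := a_regular ltjm; have := N_neq0 j (leqnn j).
rewrite /hahn_coef !pochSr factS natrM.
move: (poch (- m%:R) j) (poch (m%:R + a + b + 1) j)
  (poch (a + 1) j) (poch (- N%:R) j) pa_neq0 pN_neq0.
move=> p1 p2 p3 p4 p3_neq0 p4_neq0 Nj_neq0 aj_neq0.
by field; rewrite p3_neq0 p4_neq0 fact_neq0 Nj_neq0 aj_neq0 addrC natr1.
Qed.

Theorem hahnQ_diff_eq x :
  (x + a + 1) * (x - N%:R) * hahnQ m (x + 1) a b N
  - ((x + a + 1) * (x - N%:R) + x * (x - b - N%:R - 1)) * hahnQ m x a b N
  + x * (x - b - N%:R - 1) * hahnQ m (x - 1) a b N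
  = m%:R * (m%:R + a + b + 1) * hahnQ m x a b N.
Proof.
transitivity (\sum_(j < m.+1) hahn_coef j * (j%:R * (j%:R + a + b + 1) * poch (- x) j
    + j%:R * (j%:R + a) * (N%:R - j%:R + 1) * poch (- x) j.-1)).
  rewrite !hahnQE !mulr_sumr -sumrB -big_split /=; apply: eq_bigr => j _.
  rewrite -(hahn_diff_poch x a b N%:R j).
  move: (hahn_coef j) (poch (- (x + 1)) j) (poch (- x) j) (poch (- (x - 1)) j).
  by move=> t p q r; ring.
under eq_bigr do rewrite mulrDr.
rewrite big_split /= [X in _ + X]big_ord_recl /= !mul0r mulr0 add0r.
under [X in _ + X]eq_bigr => j _ do rewrite /bump /= add1n add0n mulrA hahn_coefS //.
rewrite big_ord_recr /= hahnQE mulr_sumr big_ord_recr /= addrAC -big_split /=.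
congr (_ + _); last by rewrite mulrCA.
by apply: eq_bigr => j _; move: (hahn_coef j) (poch (- x) j) => t p; ring.
Qed.

End HahnDifferenceEquation.

Lemma natr_binS (R : numFieldType) n h :
  'C(n, h.+1)%:R = 'C(n, h)%:R * (n - h)%N%:R / h.+1%:R :> R.
Proof.
have Sh_neq0 : h.+1%:R != 0 :> R by rewrite pnatr_eq0.
by apply: (mulIf Sh_neq0); rewrite divfK // -!natrM mulnC mul_bin_left mulnC.
Qed.

Lemma natrBB (R : pzRingType) a b c :
  (b + c <= a)%N -> (a - b - c)%N%:R = a%:R - b%:R - c%:R :> R.
Proof. by move=> le_bca; rewrite natrB ?natrB //; lia. Qed.

Lemma recurrence_of_diff_eq (R : fieldType) (e0 e1 e2 r0 r1 B D L Q0 Q1 Q2 : R) :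
  B != 0 -> r0 != 0 -> r1 != 0 -> e1 = e0 * r0 -> e2 = e1 * r1 ->
  B * Q0 - (B + D) * Q1 + D * Q2 = L * Q1 ->
  e0 * Q0 = (B + D + L) / (B * r0) * (e1 * Q1) - D / (B * r0 * r1) * (e2 * Q2).
Proof.
move=> B_neq0 r0_neq0 r1_neq0 -> -> diff.
have BQ0 : B * Q0 = (B + D + L) * Q1 - D * Q2 by rewrite mulrDl -diff; ring.
have -> : Q0 = ((B + D + L) * Q1 - D * Q2) / B by rewrite -BQ0 [B * Q0]mulrC mulfK.
by field; rewrite B_neq0 r0_neq0 r1_neq0.
Qed.

Local Ltac nonzero_by_sign :=
  repeat (apply/andP; split); first [apply: lt0r_neq0; lra | apply: ltr0_neq0; lra].

Section Coefficients.
Variables (R : realFieldType) (n k l : nat) (alpha beta : R) (i : nat).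
Hypotheses (le_kl_n : (k + l <= n)%N) (alpha_gt : -1 < alpha) (le_kl_i : (k + l <= i)%N).

Local Notation m := (i - k - l)%N.
Local Notation N := (n - k - l)%N.
Local Notation a := (alpha + (2 * l)%:R).
Local Notation b := (beta + (2 * k)%:R).
Local Notation c := (cih n k l alpha beta i).

Definition cih_weight (h : nat) : R :=
  poch (a + 1) m / (m`!)%:R * ('C(n, h)%:R)^-1 * 'C(N, h - k)%:R.

Definition cih_weight_ratio (h : nat) : R :=
  (n%:R - l%:R - h%:R) * (h%:R + 1) / ((h%:R + 1 - k%:R) * (n%:R - h%:R)).

Lemma a_shift_gt0 t : 0 < a + 1 + t%:R.
Proof. by have := ler0n R t; have := ler0n R (2 * l)%N; move: alpha_gt; lra. Qed.

Lemma cih_weight_ratio_gt0 h : (k <= h)%N -> (h < n - l)%N -> 0 < cih_weight_ratio h.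
Proof.
move=> le_kh lt_h_nl; rewrite /cih_weight_ratio.
have le_kh' : k%:R <= h%:R :> R by rewrite ler_nat.
have lt_h_nl' : h%:R + 1 <= n%:R - l%:R :> R.
  by rewrite natr1 -natrB ?ler_nat //; lia.
have := ler0n R k; have := ler0n R l => l_ge0 k_ge0.
by apply: divr_gt0; apply: mulr_gt0; lra.
Qed.

Lemma cihE h : c h = cih_weight h * hahnQ m (n - l - h)%:R a b N.
Proof. by []. Qed.

Lemma cih_weightS h : (k <= h)%N -> (h < n - l)%N ->
  cih_weight h.+1 = cih_weight h * cih_weight_ratio h.
Proof.
move=> le_kh lt_h_nl.
rewrite /cih_weight /cih_weight_ratio subSn // !natr_binS.
rewrite (_ : (N - (h - k) = n - l - h)%N); last by lia.
rewrite natrBB ?natrB -?natr1 ?natrB //; try lia.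
have Cnh_neq0 : 'C(n, h)%:R != 0 :> R by rewrite pnatr_eq0 -lt0n bin_gt0; lia.
have hk_pos : 0 < h%:R + 1 - k%:R :> R by rewrite addrAC -natrB // ltr_pwDr.
have nh_pos : 0 < n%:R - h%:R :> R by rewrite subr_gt0 ltr_nat; lia.
have h_pos : 0 < h%:R + 1 :> R by rewrite ltr_pwDr.
move: (poch _ _ / _) ('C(N, h - k)%:R) => A C.
by field; rewrite Cnh_neq0 (lt0r_neq0 nh_pos) (lt0r_neq0 hk_pos) (lt0r_neq0 h_pos).
Qed.

Lemma cih_top :
  c (n - l)%N = poch (a + 1) m / (m`!)%:R * ('C(n, l)%:R)^-1.
Proof.
rewrite cihE subnn hahnQ_at0 mulr1 /cih_weight bin_sub; last by lia.
by rewrite (_ : (n - l - k = N)%N) ?binn ?mulr1 //; lia.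
Qed.

Lemma cih_top_pred : (k + 1 <= n - l)%N ->
  c (n - l - 1)%N =
  c (n - l)%N * ((N%:R * (l%:R + 1)) / (n - l)%N%:R)
  * (1 - ((k%:R + l%:R - i%:R) * (i%:R + k%:R + l%:R + (alpha + beta + 1)))
         / ((k%:R + l%:R - n%:R) * (a + 1))).
Proof.
move=> le_k1_nl.
rewrite !cihE subnn hahnQ_at0 mulr1 (_ : (n - l - (n - l - 1) = 1)%N); last by lia.
rewrite hahnQ_at1 -[in cih_weight (n - l)](@subnK 1 (n - l)); last by lia.
rewrite addn1 cih_weightS; try lia.
rewrite /cih_weight_ratio !natrBB ?natrB //; try lia.
have := a_shift_gt0 0; rewrite addr0 => a1_pos.
have N_pos : 0 < n%:R - k%:R - l%:R :> R by rewrite -natrBB ?ltr0n //; lia.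
have := ler0n R k; have := ler0n R l; move: (cih_weight _) => w l_ge0 k_ge0.
by field; nonzero_by_sign.
Qed.

Hypothesis le_i_n : (i <= n)%N.

Lemma cih_recurrence h : (k <= h)%N -> (h + 2 <= n - l)%N ->
  c h = Ffun n k l alpha beta i h * c h.+1 + Gfun n k l alpha beta h * c h.+2.
Proof.
move=> le_kh le_h2_nl.
set y := (n - l - h.+1)%N.
have Ey1 : (n - l - h)%N%:R = y%:R + 1 :> R by rewrite natr1 /y; congr _%:R; lia.
have Ey2 : (n - l - h.+2)%N%:R = y%:R - 1 :> R.
  by apply: (addIr 1); rewrite subrK natr1 /y; congr _%:R; lia.
have le_mN : (m <= N)%N by lia.
have a_regular t : (t < m)%N -> a + 1 + t%:R != 0.
  by move=> _; rewrite lt0r_neq0 ?a_shift_gt0.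
have diff := hahnQ_diff_eq b le_mN a_regular y%:R.
have B_neq0 : (y%:R + a + 1) * (y%:R - N%:R) != 0.
  apply: mulf_neq0; first by rewrite -addrA addrC lt0r_neq0 ?a_shift_gt0.
  by rewrite ltr0_neq0 // subr_lt0 ltr_nat /y; lia.
rewrite !cihE Ey1 Ey2.
rewrite (recurrence_of_diff_eq B_neq0 _ _ (cih_weightS _ _) (cih_weightS _ _) diff);
  rewrite ?lt0r_neq0 ?cih_weight_ratio_gt0 //; try lia.
(* [lra] does not use section hypotheses, hence the local copy of [alpha_gt]. *)
have k_ge0 := ler0n R k; have l_ge0 := ler0n R l; have alpha_gt' := alpha_gt.
have le_kh' : k%:R <= h%:R :> R by rewrite ler_nat.
have le_h2_nl' : h%:R + 2 <= n%:R - l%:R :> R.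
  by rewrite -natrB -?[h%:R + 2]natrD ?ler_nat //; lia.
rewrite -/y -mulNr; congr (_ * _ + _ * _);
  rewrite /Ffun /Gfun /Hfun ?poch2 /cih_weight_ratio /y !natrBB -?natr1; try lia;
  by field; nonzero_by_sign.
Qed.

End Coefficients.

Theorem theorem1 (R : realFieldType) (n k l : nat) (alpha beta : R)
  (hkl : (k + l <= n)%N) (ha : -1 < alpha) (hb : -1 < beta)
  (i : nat) (hi1 : (k + l <= i)%N) (hi2 : (i <= n)%N) :
  let sigma := alpha + beta + 1 in
  let c := cih n k l alpha beta i in
  [/\ c (n - l)%N =
        poch (alpha + (2 * l)%:R + 1) (i - k - l) / ((i - k - l)`!)%:R
        * ('C(n, l)%:R)^-1,
      (k + 1 <= n - l)%N ->
        c (n - l - 1)%N =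
        c (n - l)%N * (((n - k - l)%N%:R * (l%:R + 1)) / (n - l)%N%:R)
        * (1 - ((k%:R + l%:R - i%:R) * (i%:R + k%:R + l%:R + sigma))
               / ((k%:R + l%:R - n%:R) * (alpha + (2 * l)%:R + 1)))
    & forall h : nat, (k <= h)%N -> (h + 2 <= n - l)%N ->
        c h = Ffun n k l alpha beta i h * c h.+1
              + Gfun n k l alpha beta h * c h.+2 ].
Proof.
move=> sigma c; split.
- exact: cih_top.
- exact: cih_top_pred.
- exact: cih_recurrence.
Qed.
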